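(* Every graph $G$ satisfies $\mathrm{cop}(G)\le \mathrm{tw}(G)/2+1$.
   Context: All graphs are finite, undirected, without loops or multiple edges. A tree decomposition of $G$ is a pair $(T,\{W_x: x\in V(T)\})$ with $T$ a tree and $W_x\subseteq V(G)$ such that $\bigcup_x W_x=V(G)$, every edge of $G$ has both ends in some $W_x$, and for each $u\in V(G)$ the set $\{x: u\in W_x\}$ induces a subtree of $T$; its width is $\max_x |W_x|-1$, and $\mathrm{tw}(G)$ is the minimum width of a tree decomposition of $G$. Cops and Robber game on a connected graph: for an integer $k\ge 1$, the cop player places $k$ cops on (not necessarily distinct) vertices, then the robber is placed on a vertex; then, starting with the cops, the players alternate moves. In a cop move, each cop either stays or moves to an adjacent vertex; in a robber move, the robber stays or moves to an adjacent vertex. The cops win if at some point a cop and the robber occupy the same vertex. Both players have complete information. The cop number $\mathrm{cop}(G)$ of a connected graph $G$ is the smallest $k$ such that the cops have a winning strategy with $k$ cops; for a non-connected graph it is the maximum cop number of its connected components. *)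

From mathcomp Require Import all_boot all_order all_algebra.
From Stdlib Require Import ClassicalEpsilon.
Set Implicit Arguments. Unset Strict Implicit. Unset Printing Implicit Defensive.

(* A (finite, simple, undirected) graph is a finType T with a symmetric,
   irreflexive adjacency relation e : rel T (assumed in the theorem). *)

Definition pb (P : Prop) : bool :=
  if excluded_middle_informative P then true else false.

Lemma pbP (P : Prop) : reflect P (pb P).
Proof. by rewrite /pb; case: excluded_middle_informative => H; constructor. Qed.

(* A finite tree on vertex set I (nonempty in use): a connected simple
   graph with exactly #|I| - 1 edges (the edge set of ordered pairs has
   size 2 (#|I| - 1)). *)
Definition is_tree (I : finType) (t : rel I) : Prop :=
  [/\ symmetric t, irreflexive t,
      (forall x y, connect t x y) &
      #|[set p : I * I | t p.1 p.2]| = 2 * (#|I| - 1)].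

Definition tree_decomposition (T : finType) (e : rel T)
    (I : finType) (t : rel I) (W : I -> {set T}) : Prop :=
  [/\ is_tree t,
      (forall u : T, exists x, u \in W x),
      (forall u v : T, e u v -> exists x, (u \in W x) && (v \in W x)) &
      (forall (u : T) (x y : I), u \in W x -> u \in W y ->
         connect [rel a b | [&& t a b, u \in W a & u \in W b]] x y)].

Definition has_td_bagsize (T : finType) (e : rel T) (b : nat) : Prop :=
  exists (n : nat) (t : rel 'I_n.+1) (W : 'I_n.+1 -> {set T}),
    tree_decomposition e t W /\ forall x, #|W x| <= b.

Lemma has_td_bagsize_ex (T : finType) (e : rel T) :
  exists b, pb (has_td_bagsize e b).
Proof.
exists #|T|; apply/pbP; exists 0, (fun _ _ => false), (fun _ => setT).
split; last by move=> x; rewrite cardsT.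
split.
- split => //.
  + by move=> x y; rewrite (ord1 x) (ord1 y) connect0.
  + rewrite card_ord subnn muln0; apply/eqP; rewrite cards_eq0; apply/eqP/setP => p; by rewrite !inE.
- by move=> u; exists ord0; rewrite inE.
- by move=> u v _; exists ord0; rewrite !inE.
- by move=> u x y _ _; rewrite (ord1 x) (ord1 y) connect0.
Qed.

Definition tw_plus1 (T : finType) (e : rel T) : nat :=
  ex_minn (has_td_bagsize_ex e).

(* Treewidth, as an integer (it is -1 for the empty graph). *)
Definition treewidth (T : finType) (e : rel T) : int :=
  (tw_plus1 e)%:Z - 1.

Definition cops (T : finType) (k : nat) := {ffun 'I_k -> T}.

Definition caught (T : finType) (k : nat) (c : cops T k) (r : T) : Prop :=
  exists i, c i = r.

Definition cop_step (T : finType) (e : rel T) (k : nat) (c c' : cops T k) : Prop :=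
  forall i, c' i = c i \/ e (c i) (c' i).

(* cops_win e c r : from the position where the cops are at c, the robber
   at r, and it is the cops' turn to move, the cops have a winning
   strategy (inductively: the attractor of the capture positions). *)
Inductive cops_win (T : finType) (e : rel T) (k : nat) : cops T k -> T -> Prop :=
| cw_caught c r : caught c r -> cops_win e c r
| cw_move c r c' : cop_step e c c' ->
    (caught c' r \/ (forall r', (r' = r \/ e r r') -> cops_win e c' r')) ->
    cops_win e c r.

(* On the connected graph induced by the component C, k cops win:
   the cops choose their starting vertices in C, then the robber chooses
   his starting vertex in C, then the cops move first. *)
Definition k_cops_win (T : finType) (e : rel T) (C : {set T}) (k : nat) : Prop :=
  exists c0 : cops T k, (forall i, c0 i \in C) /\
    forall r, r \in C -> cops_win e c0 r.

Definition component (T : finType) (e : rel T) (v : T) : {set T} :=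
  [set u | connect e v u].

Lemma k_cops_win_ex (T : finType) (e : rel T) (v : T) :
  exists k, pb (0 < k /\ k_cops_win e (component e v) k).
Proof.
exists #|T|.+1; apply/pbP; split => //.
have vC : v \in component e v by rewrite inE connect0.
pose c0 : cops T #|T|.+1 := [ffun i : 'I_#|T|.+1 =>
  if nth v (enum T) i \in component e v then nth v (enum T) i else v].
exists c0; split.
- by move=> i; rewrite /c0 ffunE; case: ifP.
- move=> r rC; apply: cw_caught.
  have Hi : index r (enum T) < #|T|.+1.
    by rewrite ltnS cardE ltnW // index_mem mem_enum.
  exists (Ordinal Hi); rewrite /c0 ffunE /= nth_index ?mem_enum //.
  by rewrite rC.
Qed.

Definition cop_number_comp (T : finType) (e : rel T) (v : T) : nat :=
  ex_minn (k_cops_win_ex e v).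

(* Cop number of the graph: maximum cop number of its components
   (for a connected graph this is just its cop number). *)
Definition cop_number (T : finType) (e : rel T) : nat :=
  \max_(v : T) cop_number_comp e v.

(* Set m := ceil((tw(G) + 1) / 2).  One cop can guard two vertices a and b: it
   guards a as long as it is not farther from a than the robber, and once it
   "shadows" the robber on a geodesic from b to a (staying within one step of the
   vertex of the geodesic at the robber's distance from a, capped at b) it guards
   b as well.  So m cops guard a bag.  The robber is kept in a component D of the
   graph minus a guarded part Y of a bag, Y containing the neighbourhood of D and
   meeting D.  While some cop does not shadow, a potential decreases.  When all
   cops shadow, the robber's component of D minus Y is strictly smaller, and a bag
   containing its neighbourhood and meeting it is found by walking in the tree
   decomposition.  Every vertex of that neighbourhood stays guarded by its cop,
   which keeps its pair or takes the vertex as the first endpoint of its new pair,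
   and the other vertices of the new bag are distributed among the cops. *)

From mathcomp Require Import all_boot all_order all_algebra.
From mathcomp Require Import zify lra.
Set Implicit Arguments. Unset Strict Implicit. Unset Printing Implicit Defensive.

Section Distance.
Variables (V : finType) (r : rel V).

Fixpoint reach (n : nat) (u v : V) : bool :=
  if n is n'.+1 then reach n' u v || [exists w, r u w && reach n' w v]
  else u == v.

Lemma reach_or_card u v : exists n, reach n u v || (n == #|V|).
Proof. by exists #|V|; rewrite eqxx orbT. Qed.

(* The distance is [#|V|] when [v] cannot be reached from [u]. *)
Definition dist u v := ex_minn (reach_or_card u v).

Lemma reach_dist_le n u v : reach n u v -> dist u v <= n.
Proof. by rewrite /dist; case: ex_minnP => k _ min_k Hn; apply: min_k; rewrite Hn. Qed.

Lemma dist_le_card u v : dist u v <= #|V|.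
Proof. by rewrite /dist; case: ex_minnP => k _ min_k; apply: min_k; rewrite eqxx orbT. Qed.

Lemma reach_dist u v : dist u v < #|V| -> reach (dist u v) u v.
Proof. by rewrite /dist; case: ex_minnP => k /orP [//| /eqP ->]; rewrite ltnn. Qed.

Lemma distxx u : dist u u = 0.
Proof. by apply/eqP; rewrite -leqn0 reach_dist_le //= eqxx. Qed.

Lemma dist_eq0 u v : dist u v < #|V| -> dist u v = 0 -> u = v.
Proof. by move=> fin_uv d0; move: (reach_dist fin_uv); rewrite d0 => /eqP. Qed.

Lemma reachD n m x y z : reach n x y -> reach m y z -> reach (n + m) x z.
Proof.
elim: n x => [|n IH] x /=; first by move=> /eqP ->.
case/orP => [x_y y_z | /existsP [w /andP [r_xw w_y]] y_z]; first by rewrite IH.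
by apply/orP; right; apply/existsP; exists w; rewrite r_xw IH.
Qed.

Lemma dist_triangle x y z : dist x z <= dist x y + dist y z.
Proof.
have [fin_xy|] := ltnP (dist x y) #|V|; last first.
  by move=> inf_xy; apply: leq_trans (dist_le_card x z) (leq_trans inf_xy (leq_addr _ _)).
have [fin_yz|] := ltnP (dist y z) #|V|; last first.
  by move=> inf_yz; apply: leq_trans (dist_le_card x z) (leq_trans inf_yz (leq_addl _ _)).
exact/reach_dist_le/(reachD (reach_dist fin_xy) (reach_dist fin_yz)).
Qed.

Lemma dist_adj u w v : r u w -> dist u v <= (dist w v).+1.
Proof.
move=> r_uw; apply: leq_trans (dist_triangle u w v) _; rewrite -add1n leq_add2r.
by apply: reach_dist_le => /=; apply/orP; right; apply/existsP; exists w; rewrite r_uw /=.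
Qed.

Lemma reach_path x p : path r x p -> reach (size p) x (last x p).
Proof.
elim: p x => [|y p IH] x /=; first by rewrite eqxx.
by case/andP => r_xy /IH y_p; apply/orP; right; apply/existsP; exists y; rewrite r_xy.
Qed.

Lemma connect_dist_lt u v : connect r u v -> dist u v < #|V|.
Proof.
case/connectP => p p_path ->; have [q q_path uniq_q _] := shortenP p_path.
apply: leq_ltn_trans (reach_dist_le (reach_path q_path)) _.
by have /= <- := card_uniqP uniq_q; apply: max_card.
Qed.

(* A neighbour of [x] one step closer to [a], or [x] itself when there is none. *)
Definition step_to a x :=
  odflt x [pick w | r x w && (dist w a == (dist x a).-1)].

Lemma step_to_adj a x : step_to a x = x \/ r x (step_to a x).
Proof. by rewrite /step_to; case: pickP => [w /andP [r_xw _]|_]; [right|left]. Qed.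

Lemma dist_step_to a x : dist x a < #|V| -> dist (step_to a x) a = (dist x a).-1.
Proof.
rewrite /step_to; case: pickP => [w /andP [_ /eqP //] | no_w fin_x].
case: (posnP (dist x a)) => [-> // | pos_x]; exfalso.
have := reach_dist fin_x; case Ed: (dist x a) pos_x => [//|d] _ /=.
case/orP => [/reach_dist_le | /existsP [w /andP [r_xw w_a]]]; first by rewrite Ed ltnn.
have d_w : dist w a = d.
  by apply/eqP; rewrite eqn_leq reach_dist_le //= -ltnS -Ed dist_adj.
by move: (no_w w); rewrite r_xw d_w Ed eqxx.
Qed.

Lemma step_to_closer a x : 0 < dist x a < #|V| -> r x (step_to a x).
Proof.
case/andP => pos_x fin_x; case: (step_to_adj a x) => [eq_x|//].
by have := dist_step_to fin_x; rewrite eq_x; lia.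
Qed.

Hypothesis r_sym : symmetric r.

Lemma reach_sym n u v : reach n u v -> reach n v u.
Proof.
elim: n u v => [|n IH] u v /=; first by rewrite eq_sym.
case/orP => [/IH -> // | /existsP [w /andP [r_uw /IH w_v]]].
have w_u : reach 1 w u by apply/orP; right; apply/existsP; exists u; rewrite r_sym r_uw /=.
by have := reachD w_v w_u; rewrite addn1.
Qed.

Lemma distC u v : dist u v = dist v u.
Proof.
suff le_dist x y : dist x y <= dist y x by apply/eqP; rewrite eqn_leq !le_dist.
have [fin_yx|] := ltnP (dist y x) #|V|; last exact: leq_trans (dist_le_card x y).
exact/reach_dist_le/reach_sym/reach_dist.
Qed.

Lemma dist_stay_or_adj x y v :
  y = x \/ r x y -> dist x v <= (dist y v).+1 /\ dist y v <= (dist x v).+1.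
Proof.
case=> [-> | r_xy]; first by rewrite !leqnSn.
by rewrite !dist_adj // r_sym.
Qed.

End Distance.

Lemma connect_cross (V : finType) (r : rel V) (P : pred V) a b :
  connect r a b -> ~~ P a -> P b -> exists u v, [/\ r u v, ~~ P u & P v].
Proof.
case/connectP => p + ->; elim: p a => [|c p IH] a /=; first by move=> _ /negP.
case/andP => r_ac c_p Pa; case Pc: (P c); last by apply: IH; rewrite ?Pc.
by exists a, c; rewrite Pc.
Qed.

(* Orienting every vertex but [x0] towards [x0] yields #|V| - 1 edges, each
   counted twice as an ordered pair. *)
Lemma card_edges_connected (V : finType) (r : rel V) (x0 : V) :
  symmetric r -> (forall a b, connect r a b) ->
  2 * (#|V| - 1) <= #|[set p : V * V | r p.1 p.2]|.
Proof.
move=> r_sym r_conn; pose up u := step_to r x0 u.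
have up_closer u : u != x0 -> r u (up u) /\ dist r (up u) x0 < dist r u x0.
  move=> u_x0; have fin_u := connect_dist_lt (r_conn u x0).
  have pos_u : 0 < dist r u x0.
    by rewrite lt0n; apply: contra u_x0 => /eqP /(dist_eq0 fin_u) ->.
  by rewrite step_to_closer ?pos_u // dist_step_to //; split => //; lia.
pose A := [set~ x0].
pose ups := [set (u, up u) | u in A].
pose downs := [set (up u, u) | u in A].
have card_ups : #|ups| = #|V| - 1 by rewrite card_in_imset ?cardsC1 ?subn1 // => u v _ _ [].
have card_downs : #|downs| = #|V| - 1 by rewrite card_in_imset ?cardsC1 ?subn1 // => u v _ _ [].
have disjoint_ups_downs : ups :&: downs = set0.
  apply/setP => -[a b]; rewrite !inE; apply/negP => /andP [].
  case/imsetP => u u_A [-> ->]; case/imsetP => v v_A [u_up up_u].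
  move: u_A v_A; rewrite !inE => /up_closer [_] + /up_closer [_].
  by rewrite up_u -u_up; lia.
have sub_edges : ups :|: downs \subset [set p : V * V | r p.1 p.2].
  apply/subsetP => -[a b]; rewrite !inE => /orP [] /imsetP [u + [-> ->]];
    by rewrite !inE => /up_closer [r_u _] //=; rewrite r_sym.
have := subset_leq_card sub_edges.
by rewrite cardsU disjoint_ups_downs cards0 card_ups card_downs; lia.
Qed.

Definition del_edge (I : finType) (t : rel I) (w z : I) : rel I :=
  fun a b => t a b && ((a, b) \notin [set (w, z); (z, w)]).
Arguments del_edge I t w z a b /.

Lemma del_edge_sym (I : finType) (t : rel I) w z :
  symmetric t -> symmetric (del_edge t w z).
Proof.
move=> t_sym a b; rewrite /= t_sym !inE !xpair_eqE orbC.
by rewrite [(b == w) && _]andbC [(b == z) && _]andbC.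
Qed.

(* Without the edge, too few edges remain for [card_edges_connected]. *)
Lemma tree_del_edge (I : finType) (t : rel I) w z :
  is_tree t -> t w z -> ~~ connect (del_edge t w z) w z.
Proof.
case=> t_sym t_irr t_conn t_card t_wz; apply/negP => conn_wz.
have d_sym := del_edge_sym w z t_sym.
have d_conn a b : connect (del_edge t w z) a b.
  apply: connect_sub (t_conn a b) => u v t_uv.
  have [|uv_out] := boolP ((u, v) \in [set (w, z); (z, w)]); last first.
    by apply: connect1; rewrite /= t_uv.
  rewrite !inE !xpair_eqE => /orP [] /andP [/eqP -> /eqP ->] //.
  by rewrite (sym_connect_sym d_sym).
have w_neq_z : w != z by apply: contraTneq t_wz => ->; rewrite t_irr.
have := card_edges_connected w d_sym d_conn.
have -> : [set p | del_edge t w z p.1 p.2] = [set p | t p.1 p.2] :\: [set (w, z); (z, w)].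
  by apply/setP => -[a b]; rewrite !inE /= in_set2 andbC.
have sub_wz : [set (w, z); (z, w)] \subset [set p : I * I | t p.1 p.2].
  by apply/subsetP => p; rewrite !inE => /orP [] /eqP -> /=; rewrite // t_sym.
rewrite cardsD (setIidPr sub_wz) cards2 t_card xpair_eqE (negbTE w_neq_z) /=.
by have := max_card (mem [set w; z]); rewrite cards2 w_neq_z /=; lia.
Qed.

Lemma del_edge_crossing (I : finType) (t : rel I) z w u v :
  symmetric t -> t u v ->
  ~~ connect (del_edge t z w) w u -> connect (del_edge t z w) w v -> u = z /\ v = w.
Proof.
move=> t_sym t_uv w_u w_v.
have [|uv_out] := boolP ((u, v) \in [set (z, w); (w, z)]); last first.
  have d_vu : del_edge t z w v u by rewrite del_edge_sym // /= t_uv.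
  by rewrite (connect_trans w_v (connect1 d_vu)) in w_u.
rewrite !inE !xpair_eqE => /orP [] /andP [/eqP eq_u /eqP eq_v]; first by [].
by move: w_u; rewrite eq_u connect0.
Qed.

Lemma connect_del_edge_closer (I : finType) (t : rel I) x z w u :
  dist t u x < #|I| -> dist t u x < dist t z x -> connect (del_edge t z w) u x.
Proof.
move Ek: (dist t u x) => k; elim: k u Ek => [|k IH] u d_u fin_u lt_z.
  by rewrite (dist_eq0 _ d_u) ?d_u // connect0.
have neq_z y : dist t y x < dist t z x -> y != z by apply: contraTneq => ->; rewrite ltnn.
have r_up : t u (step_to t x u) by rewrite step_to_closer // d_u fin_u.
have d_up : dist t (step_to t x u) x = k by rewrite dist_step_to d_u.
apply: connect_trans (connect1 _) (IH _ d_up _ _); try lia.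
rewrite /= r_up !inE !xpair_eqE (negbTE (neq_z u _)) ?d_u //.
by rewrite (negbTE (neq_z (step_to t x u) _)) ?andbF // d_up; lia.
Qed.

Definition nbhd (T : finType) (e : rel T) (D : {set T}) : {set T} :=
  [set y | (y \notin D) && [exists x in D, e x y]].

Definition induced (T : finType) (e : rel T) (D : {set T}) : rel T :=
  fun a b => [&& e a b, a \in D & b \in D].
Arguments induced T e D a b /.

Definition component_in (T : finType) (e : rel T) (D : {set T}) (r : T) : {set T} :=
  [set u | connect (induced e D) r u].

Lemma connect_induced_closure (T : finType) (e0 e : rel T) x u :
  subrel e0 e -> connect e0 x u -> connect (induced e [set w | connect e0 x w]) x u.
Proof.
move=> sub /connectP [p p_path ->]; apply/connectP; exists p => //.
suff closure_path z : connect e0 x z -> path e0 z p ->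
    path (induced e [set w | connect e0 x w]) z p by apply: closure_path.
elim: p z {p_path} => [|y p IH] z //= x_z /andP [e0_zy y_p].
have x_y := connect_trans x_z (connect1 e0_zy).
by rewrite sub // !inE x_z x_y IH.
Qed.

Lemma component_in_sub (T : finType) (e : rel T) (D : {set T}) r :
  r \in D -> component_in e D r \subset D.
Proof.
move=> r_D; apply/subsetP => u; rewrite inE => /connectP [p + ->].
by case/lastP: p => [//|p y]; rewrite rcons_path last_rcons => /andP [_ /and3P []].
Qed.

Lemma component_in_connected (T : finType) (e : rel T) (D : {set T}) r u :
  u \in component_in e D r -> connect (induced e (component_in e D r)) r u.
Proof.
rewrite inE; apply: (connect_induced_closure (e0 := induced e D)).
by move=> a b /and3P [].
Qed.

Lemma nbhd_component_in (T : finType) (e : rel T) (D : {set T}) r :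
  r \in D -> nbhd e (component_in e D r) \subset nbhd e D.
Proof.
move=> r_D; have sub := subsetP (component_in_sub e r_D).
apply/subsetP => y; rewrite inE => /andP [y_out /existsP [x /andP [x_K e_xy]]].
have y_notD : y \notin D.
  apply: contra y_out => y_D; move: (x_K); rewrite !inE => r_x.
  by apply: connect_trans r_x (connect1 _); rewrite /= e_xy sub.
by rewrite inE y_notD; apply/existsP; exists x; rewrite sub.
Qed.

Lemma nbhd_setD (T : finType) (e : rel T) (D Y : {set T}) :
  nbhd e (D :\: Y) \subset Y :|: nbhd e D.
Proof.
apply/subsetP => y; rewrite !inE => /andP [y_out /existsP [x /andP [x_DY e_xy]]].
case: (boolP (y \in Y)) y_out => //= _ y_notD; rewrite y_notD.
by apply/existsP; exists x; move: x_DY; rewrite inE => /andP [_ ->].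
Qed.

Section TreeDecomposition.
Variables (T : finType) (e : rel T) (I : finType) (t : rel I) (W : I -> {set T}).
Hypothesis td : tree_decomposition e t W.

Definition meeting_bags (D : {set T}) := [set y | [exists d in D, d \in W y]].

Lemma meeting_bags_connected (D : {set T}) r0 :
  r0 \in D -> (forall u, u \in D -> connect (induced e D) r0 u) ->
  {in meeting_bags D &, forall y1 y2, connect (induced t (meeting_bags D)) y1 y2}.
Proof.
case: td => [[t_sym _ _ _] bag_cover bag_edge bag_subtree] r0_D D_conn.
set S := meeting_bags D.
have S_sym : symmetric (induced t S).
  by move=> a b; rewrite /= t_sym [(a \in S) && _]andbC.
have bags_of u y1 y2 : u \in D -> u \in W y1 -> u \in W y2 -> connect (induced t S) y1 y2.
  move=> u_D u_y1 u_y2; apply: connect_sub (bag_subtree u y1 y2 u_y1 u_y2).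
  move=> a b /and3P [t_ab u_a u_b]; apply: connect1.
  by rewrite /= t_ab !inE /=; apply/andP; split; apply/existsP; exists u; apply/andP.
have bags_along p u : u \in D -> path (induced e D) u p ->
    forall y1 y2, u \in W y1 -> last u p \in W y2 -> connect (induced t S) y1 y2.
  elim: p u => [|v p IH] u u_D /=; first by move=> _ y1 y2; apply: bags_of.
  case/andP => /and3P [e_uv _ v_D] v_p y1 y2 u_y1 last_y2.
  have [y /andP [u_y v_y]] := bag_edge u v e_uv.
  exact: connect_trans (bags_of u y1 y u_D u_y1 u_y) (IH v v_D v_p y y2 v_y last_y2).
have [y0 r0_y0] := bag_cover r0.
have from_y0 y : y \in S -> connect (induced t S) y0 y.
  rewrite inE => /existsP [d /andP [d_D d_y]].
  have /connectP [p p_path d_last] := D_conn d d_D.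
  by apply: (bags_along p r0) => //; rewrite -d_last.
move=> y1 y2 y1_S y2_S; apply: connect_trans (from_y0 y2 y2_S).
by rewrite (sym_connect_sym S_sym) from_y0.
Qed.

(* Take the bag [z] closest to [x] among those meeting [D].  Deleting the first edge
   on the way from [z] to [x] separates [x] from all bags meeting [D], so every
   vertex of the neighbourhood, which lies in [W x] and in a bag meeting [D], lies
   in [W z]. *)
Lemma td_nbhd_bag (D : {set T}) r0 x :
  r0 \in D -> (forall u, u \in D -> connect (induced e D) r0 u) ->
  nbhd e D \subset W x ->
  exists z, nbhd e D \subset W z /\ exists2 d, d \in D & d \in W z.
Proof.
move=> r0_D D_conn N_x; have S_conn := meeting_bags_connected r0_D D_conn.
case: (td) => [t_tree bag_cover bag_edge bag_subtree]; have [t_sym _ t_conn _] := t_tree.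
set S := meeting_bags D.
have [y0 r0_y0] := bag_cover r0.
have y0_S : y0 \in S by rewrite inE; apply/existsP; exists r0; apply/andP.
have [z z_S z_min] := arg_minnP (fun y => dist t y x) y0_S.
have {}z_S : z \in S := z_S.
exists z; split; last by move: z_S; rewrite inE => /existsP [d /andP [? ?]]; exists d.
have fin y : dist t y x < #|I| := connect_dist_lt (t_conn y x).
have [z0|pos_z] := posnP (dist t z x); first by rewrite (dist_eq0 (fin z) z0).
set w := step_to t x z.
have t_zw : t z w by rewrite step_to_closer ?pos_z ?fin.
have d_w : dist t w x = (dist t z x).-1 by rewrite dist_step_to.
have w_S : w \notin S by apply: contraT => /negbNE /z_min; rewrite d_w; lia.
set X := [set a | connect (del_edge t z w) w a].
have x_X : x \in X by rewrite inE connect_del_edge_closer ?fin // d_w; lia.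
have z_X : z \notin X.
  by rewrite inE (sym_connect_sym (del_edge_sym z w t_sym)) tree_del_edge.
have cross u v : t u v -> u \notin X -> v \in X -> u = z /\ v = w.
  by move=> t_uv; rewrite !inE; apply: del_edge_crossing.
have S_X y : y \in S -> y \notin X.
  move=> y_S; apply/negP => y_X.
  have [u [v [/and3P [t_uv _ v_S] u_X v_X]]] :=
    connect_cross (P := fun a => a \in X) (S_conn z y z_S y_S) z_X y_X.
  by have [_ v_w] := cross u v t_uv u_X v_X; rewrite v_w (negbTE w_S) in v_S.
apply/subsetP => v v_N; have v_x := subsetP N_x v v_N.
move: (v_N); rewrite inE => /andP [_ /existsP [d /andP [d_D e_dv]]].
have [y /andP [d_y v_y]] := bag_edge d v e_dv.
have y_S : y \in S by rewrite inE; apply/existsP; exists d; apply/andP.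
have [a [b [/and3P [t_ab v_a v_b] a_X b_X]]] :=
  connect_cross (P := fun a => a \in X) (bag_subtree v y x v_y v_x) (S_X y y_S) x_X.
by have [a_z _] := cross a b t_ab a_X b_X; rewrite -a_z.
Qed.

End TreeDecomposition.

Section Guard.
Variables (T : finType) (e : rel T) (C : {set T}).
Hypothesis e_sym : symmetric e.
Hypothesis C_closed : forall x y, x \in C -> e x y -> y \in C.
Hypothesis C_fin : {in C &, forall x y, dist e x y < #|T|}.

Definition geo_len a b := dist e b a.

(* The vertex at distance [j] from [a] on a fixed geodesic from [b] to [a]. *)
Definition geo a b j := iter (geo_len a b - j) (step_to e a) b.

Lemma step_to_in a x : x \in C -> step_to e a x \in C.
Proof. by move=> x_C; case: (step_to_adj e a x) => [-> // | /(C_closed x_C)]. Qed.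

Lemma iter_step_to_in a k x : x \in C -> iter k (step_to e a) x \in C.
Proof. by move=> x_C; elim: k => //= k; apply: step_to_in. Qed.

Lemma geo_in a b j : b \in C -> geo a b j \in C.
Proof. exact: iter_step_to_in. Qed.

Lemma dist_geo a b j : a \in C -> b \in C -> j <= geo_len a b -> dist e (geo a b j) a = j.
Proof.
move=> a_C b_C le_j.
suff iter_dist k : dist e (iter k (step_to e a) b) a = geo_len a b - k by rewrite iter_dist; lia.
elim: k => [|k IH] /=; first by rewrite subn0.
by rewrite dist_step_to ?C_fin ?iter_step_to_in // IH subnS.
Qed.

Lemma dist_geo_end a b j : dist e (geo a b j) b <= geo_len a b - j.
Proof.
rewrite /geo; elim: (geo_len a b - j) => [|k IH] /=; first by rewrite distxx.
have [_ step_b] := dist_stay_or_adj e_sym b (step_to_adj e a (iter k (step_to e a) b)).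
exact: leq_trans step_b _.
Qed.

Lemma geo_end a b : geo a b (geo_len a b) = b.
Proof. by rewrite /geo subnn. Qed.

Lemma geo0 a b : a \in C -> b \in C -> geo a b 0 = a.
Proof.
move=> a_C b_C; apply: dist_eq0 (dist_geo a_C b_C (leq0n _)).
by rewrite C_fin ?geo_in.
Qed.

Lemma geo_adj a b j : j < geo_len a b ->
  geo a b j = geo a b j.+1 \/ e (geo a b j.+1) (geo a b j).
Proof.
move=> lt_j; have -> : geo a b j = step_to e a (geo a b j.+1).
  by rewrite /geo -iterS; congr iter; lia.
exact: step_to_adj.
Qed.

Definition on_geo a b c := (dist e c a <= geo_len a b) && (c == geo a b (dist e c a)).

Lemma on_geoP a b c : on_geo a b c -> c = geo a b (dist e c a) /\ dist e c a <= geo_len a b.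
Proof. by case/andP => le_c /eqP. Qed.

Lemma geo_on_geo a b j : a \in C -> b \in C -> j <= geo_len a b -> on_geo a b (geo a b j).
Proof. by move=> a_C b_C le_j; rewrite /on_geo dist_geo // le_j eqxx. Qed.

Lemma on_geo_pos a b c : a \in C -> b \in C -> c \in C -> ~~ on_geo a b c -> 0 < dist e c a.
Proof.
move=> a_C b_C c_C; apply: contraR; rewrite -eqn0Ngt => /eqP /(dist_eq0 (C_fin c_C a_C)) ->.
by have := geo_on_geo a_C b_C (leq0n _); rewrite geo0.
Qed.

(* The shadow of the robber is [geo a b (shadow a b r)]. *)
Definition shadow a b r := minn (dist e r a) (geo_len a b).

Lemma shadow_stay_or_adj a b r r' : r' = r \/ e r r' ->
  shadow a b r <= (shadow a b r').+1 /\ shadow a b r' <= (shadow a b r).+1.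
Proof. by move=> /(dist_stay_or_adj e_sym a); rewrite /shadow; lia. Qed.

Definition guard_move a b c r :=
  if on_geo a b c then
    if dist e c a < shadow a b r then geo a b (dist e c a).+1
    else if shadow a b r < dist e c a then geo a b (dist e c a).-1 else c
  else step_to e a c.

Lemma guard_move_step a b c r : guard_move a b c r = c \/ e c (guard_move a b c r).
Proof.
rewrite /guard_move; case: ifP => [/on_geoP [] | _]; last exact: step_to_adj.
move: (dist e c a) => j -> le_j; have le_s : shadow a b r <= geo_len a b := geq_minr _ _.
case: ifP => [lt_j | _].
  have [eq_geo | e_geo] := geo_adj (leq_trans lt_j le_s); first by left.
  by right; rewrite e_sym.
case: ifP => [lt_s | _]; last by left.
by case: j lt_s le_j => // j _ /= /geo_adj [->|]; [left | right].
Qed.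

Lemma guard_move_in a b c r : c \in C -> guard_move a b c r \in C.
Proof. by move=> c_C; case: (guard_move_step a b c r) => [-> // | /(C_closed c_C)]. Qed.

(* Moving first, the cop reaches [a] no later than the robber. *)
Definition guards a c r := dist e c a <= (dist e r a).+1.

Definition shadowing a b c r :=
  [&& on_geo a b c, dist e c a <= (shadow a b r).+1 & shadow a b r <= (dist e c a).+1].

Lemma guards_move a b c r r' : a \in C -> b \in C -> c \in C -> r' = r \/ e r r' ->
  guards a c r -> guards a (guard_move a b c r) r'.
Proof.
move=> a_C b_C c_C /(dist_stay_or_adj e_sym a) [le_r _].
have [le_sr le_sg] : shadow a b r <= dist e r a /\ shadow a b r <= geo_len a b.
  by rewrite /shadow; lia.
rewrite /guards /guard_move => g_c; case: ifP => [/on_geoP [_ le_c] | _].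
  case: ifP => [lt_c | ge_c]; first by rewrite dist_geo //; lia.
  by case: ifP => lt_s; rewrite ?dist_geo //; lia.
by rewrite dist_step_to ?C_fin //; lia.
Qed.

Lemma shadowing_move_eq a b c r :
  shadowing a b c r -> guard_move a b c r = geo a b (shadow a b r).
Proof.
case/and3P => on_c le_c le_s; rewrite /guard_move on_c; have [c_geo _] := on_geoP on_c.
case: ifP => lt_c; first by congr geo; lia.
by case: ifP => lt_s; [congr geo; lia | rewrite {1}c_geo; congr geo; lia].
Qed.

Lemma shadowing_move a b c r r' : a \in C -> b \in C -> r' = r \/ e r r' ->
  shadowing a b c r -> shadowing a b (guard_move a b c r) r'.
Proof.
move=> a_C b_C /(shadow_stay_or_adj a b) [le_s le_s'] sh_c.
have le_sg : shadow a b r <= geo_len a b := geq_minr _ _.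
by rewrite (shadowing_move_eq sh_c) /shadowing geo_on_geo ?dist_geo //= le_s le_s'.
Qed.

Lemma shadowing_guards a b c r : shadowing a b c r -> guards a c r.
Proof. by case/and3P => _ le_c _; rewrite /guards; move: le_c; rewrite /shadow; lia. Qed.

Lemma shadowing_guards_end a b c r : shadowing a b c r -> guards b c r.
Proof.
case/and3P => /on_geoP [c_geo le_c] le_cs le_sc; rewrite /guards {1}c_geo.
have := dist_geo_end a b (dist e c a); have := dist_triangle e b r a.
by rewrite (distC e_sym b r) -/(geo_len a b); move: le_cs le_sc; rewrite /shadow; lia.
Qed.

Lemma guard_captures a b c : a \in C -> b \in C -> c \in C ->
  guards a c a -> guard_move a b c a = a.
Proof.
move=> a_C b_C c_C; rewrite /guards /guard_move distxx.
have -> : shadow a b a = 0 by rewrite /shadow distxx min0n.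
case: ifP => [/on_geoP [c_geo _] le_c | off_c le_c].
  rewrite -[X in _ = X](geo0 a_C b_C).
  by case: ifP => pos_c; [|rewrite {1}c_geo]; congr geo; lia.
have pos_c := on_geo_pos a_C b_C c_C (negbT off_c); have fin_c := C_fin c_C a_C.
by apply: (dist_eq0 (r := e)); rewrite dist_step_to //; lia.
Qed.

Lemma shadowing_captures a b c : shadowing a b c b -> guard_move a b c b = b.
Proof.
move=> sh_c; rewrite (shadowing_move_eq sh_c).
by rewrite /shadow -/(geo_len a b) minnn geo_end.
Qed.

(* Decreases at every move of a non-shadowing cop: behind the shadow it advances
   along the geodesic, ahead of it it retreats, and off the geodesic it walks
   towards [a], which lies on it. *)
Definition guard_potential a b c r :=
  if shadowing a b c r then 0
  else if on_geo a b c then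
    if dist e c a <= (shadow a b r).+1 then geo_len a b - dist e c a
    else geo_len a b + 1 + dist e c a
  else 2 * geo_len a b + 2 + dist e c a.

Lemma potential_shadowing a b c r : shadowing a b c r -> guard_potential a b c r = 0.
Proof. by rewrite /guard_potential => ->. Qed.

Lemma potential_geo a b j r : a \in C -> b \in C -> j <= geo_len a b ->
  guard_potential a b (geo a b j) r <=
    if j <= (shadow a b r).+1 then geo_len a b - j else geo_len a b + 1 + j.
Proof. by move=> a_C b_C le_j; rewrite /guard_potential geo_on_geo // dist_geo //; case: ifP. Qed.

Lemma potential_on_geo a b c r : on_geo a b c -> guard_potential a b c r <= 2 * geo_len a b + 1.
Proof.
move=> on_c; have [_ le_c] := on_geoP on_c.
by rewrite /guard_potential on_c; case: ifP => // _; case: ifP => _; lia.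
Qed.

Lemma potential_off_geo a b c r :
  ~~ on_geo a b c -> guard_potential a b c r = 2 * geo_len a b + 2 + dist e c a.
Proof. by move=> /negbTE off_c; rewrite /guard_potential /shadowing !off_c. Qed.

Lemma potential_decrease a b c r r' : a \in C -> b \in C -> c \in C -> r' = r \/ e r r' ->
  ~~ shadowing a b c r ->
  guard_potential a b (guard_move a b c r) r' < guard_potential a b c r.
Proof.
move=> a_C b_C c_C r_r' not_sh; have [le_s le_s'] := shadow_stay_or_adj a b r_r'.
have le_sg : shadow a b r <= geo_len a b := geq_minr _ _.
have [on_c | off_c] := boolP (on_geo a b c); last first.
  rewrite /guard_move (negbTE off_c) (potential_off_geo r off_c).
  have pos_c := on_geo_pos a_C b_C c_C off_c.
  have [on_c' | off_c'] := boolP (on_geo a b (step_to e a c)).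
    by apply: leq_ltn_trans (potential_on_geo r' on_c') _; lia.
  by rewrite potential_off_geo // dist_step_to ?C_fin //; lia.
have [_ le_c] := on_geoP on_c.
have -> : guard_potential a b c r = if dist e c a <= (shadow a b r).+1
    then geo_len a b - dist e c a else geo_len a b + 1 + dist e c a.
  by rewrite /guard_potential (negbTE not_sh) on_c.
move: not_sh; rewrite /shadowing /guard_move on_c /= => far_c.
case: ifP => [lt_c | ge_c].
  apply: leq_ltn_trans (potential_geo r' a_C b_C _) _; first lia.
  by do 2!case: ifP; lia.
case: ifP => [gt_c | le_c']; last lia.
apply: leq_ltn_trans (potential_geo r' a_C b_C _) _; first lia.
by do 2!case: ifP; lia.
Qed.

End Guard.

Definition endpoint (T : eqType) (p : T * T) y := (y == p.1) || (y == p.2).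

Lemma endpoint_fst (T : eqType) (p : T * T) : endpoint p p.1.
Proof. by rewrite /endpoint eqxx. Qed.

Lemma endpoint_snd (T : eqType) (p : T * T) : endpoint p p.2.
Proof. by rewrite /endpoint eqxx orbT. Qed.

Section Reassign.
Variables (T : finType) (m : nat) (A : 'I_m -> T * T) (N Y : {set T}).
Hypotheses (m_gt0 : 0 < m) (N_Y : N \subset Y) (card_Y : #|Y| <= 2 * m).
Hypothesis N_covered : forall y, y \in N -> exists i, endpoint (A i) y.

Let i0 : 'I_m := Ordinal m_gt0.

(* Each vertex of [N] is owned by a pair having it as an endpoint.  A pair owning
   both of its endpoints is kept; any other pair puts the vertex it owns, if any,
   first, and its remaining slots are free. *)
Definition owner y := odflt i0 [pick i | endpoint (A i) y].

Definition owned i := [set y in N | owner y == i].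

Definition keep i := [&& (A i).1 \in owned i, (A i).2 \in owned i & (A i).1 != (A i).2].

Definition owned_pick i := odflt (A i).1 [pick y in owned i].

Definition free_slot (p : 'I_m * bool) := ~~ keep p.1 && (p.2 || (owned p.1 == set0)).

Definition fill (p : 'I_m * bool) :=
  nth (if p.2 then (A p.1).2 else (A p.1).1) (enum (Y :\: N))
      (index p (enum [set q | free_slot q])).

Definition slot i s := if free_slot (i, s) then fill (i, s) else owned_pick i.

Definition reassigned i := if keep i then A i else (slot i false, slot i true).

Lemma owned_owner y : y \in N -> y \in owned (owner y).
Proof. by move=> y_N; rewrite inE y_N eqxx. Qed.

Lemma owned_endpoint i y : y \in owned i -> endpoint (A i) y.
Proof.
rewrite inE => /andP [y_N /eqP <-]; rewrite /owner; case: pickP => [//|none].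
by have [j] := N_covered y_N; rewrite none.
Qed.

Lemma owned_single i y y' : ~~ keep i -> y \in owned i -> y' \in owned i -> y = y'.
Proof.
move=> not_keep y_i y'_i; apply/eqP; apply: contraNT not_keep.
case/orP: (owned_endpoint y_i) => /eqP eq_y; case/orP: (owned_endpoint y'_i) => /eqP eq_y';
  by subst y y'; rewrite /keep ?y_i ?y'_i /= ?eqxx // eq_sym.
Qed.

Lemma owned_pick_in i : owned i != set0 -> owned_pick i \in owned i.
Proof.
rewrite /owned_pick; case: pickP => [y //|none] /set0Pn [y y_i].
by rewrite none in y_i.
Qed.

Lemma card_free_slots : #|Y :\: N| <= #|[set q | free_slot q]|.
Proof.
have card_N : #|N| = \sum_i #|owned i|.
  rewrite -sum1_card (partition_big owner predT) //=.
  by apply: eq_bigr => i _; rewrite sum1dep_card.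
have card_slots : #|[set q | free_slot q]| = \sum_i (free_slot (i, true) + free_slot (i, false)).
  rewrite -sum1dep_card big_mkcond /=.
  rewrite -(pair_bigA _ (fun i s => if free_slot (i, s) then 1 else 0)) /=.
  by apply: eq_bigr => i _; rewrite big_bool.
have slots_owned i : 2 <= free_slot (i, true) + free_slot (i, false) + #|owned i|.
  rewrite /free_slot /=; case keep_i: (keep i) => /=.
    case/and3P: keep_i => in1 in2 neq.
    have : [set (A i).1; (A i).2] \subset owned i.
      by apply/subsetP => y; rewrite in_set2 => /orP [] /eqP ->.
    by move/subset_leq_card; rewrite cards2 neq.
  case: (owned i =P set0) => [-> | /eqP]; first by rewrite cards0.
  by rewrite -card_gt0; lia.
rewrite cardsD (setIidPr N_Y) card_slots.
have : \sum_(i < m) 2 <= \sum_i (free_slot (i, true) + free_slot (i, false) + #|owned i|).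
  by apply: leq_sum => i _; apply: slots_owned.
by rewrite big_split /= -card_N sum_nat_const card_ord; lia.
Qed.

Lemma reassigned_first i : ~~ keep i -> owned i != set0 -> (reassigned i).1 = owned_pick i.
Proof.
move=> /negbTE not_keep /negbTE owned_i.
by rewrite /reassigned /slot /free_slot /= not_keep owned_i.
Qed.

Lemma reassigned_fill p : free_slot p -> endpoint (reassigned p.1) (fill p).
Proof.
case: p => i s free_p; have /andP [/= /negbTE not_keep _] := free_p.
by rewrite /reassigned /endpoint /slot not_keep; case: s free_p => /= ->; rewrite eqxx ?orbT.
Qed.

Lemma slot_endpoint i s :
  ~~ keep i -> slot i s \in Y \/ slot i s = if s then (A i).2 else (A i).1.
Proof.
move=> not_keep; rewrite /slot; case: ifP => [_ | not_free].
  rewrite /fill; set k := index _ _.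
  have [in_range | out_of_range] := ltnP k (size (enum (Y :\: N))).
    have := mem_nth (if s then (A i).2 else (A i).1) in_range.
    by rewrite mem_enum inE => /andP [_ ?]; left.
  by right; rewrite nth_default.
have owned_i : owned i != set0.
  by move: not_free; rewrite /free_slot not_keep; case: (owned i == set0); rewrite ?orbT.
by left; have := owned_pick_in owned_i; rewrite inE => /andP [/(subsetP N_Y)].
Qed.

Lemma reassigned_keeps y : y \in N ->
  exists2 i, endpoint (A i) y & reassigned i = A i \/ (reassigned i).1 = y.
Proof.
move=> y_N; have y_i := owned_owner y_N; exists (owner y); first exact: owned_endpoint.
have [keep_i | not_keep] := boolP (keep (owner y)); first by left; rewrite /reassigned keep_i.
have owned_i : owned (owner y) != set0 by apply/set0Pn; exists y.
by right; rewrite reassigned_first // (owned_single not_keep (owned_pick_in owned_i) y_i).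
Qed.

Lemma reassigned_covers y : y \in Y -> exists i, endpoint (reassigned i) y.
Proof.
move=> y_Y; have [y_N | y_notN] := boolP (y \in N).
  have [i end_y eq_i] := reassigned_keeps y_N; exists i.
  by case: eq_i => [-> // | first_y]; rewrite /endpoint first_y eqxx.
have y_rest : y \in Y :\: N by rewrite inE y_notN.
set slots := [set q | free_slot q].
have lt_k : index y (enum (Y :\: N)) < size (enum slots).
  by rewrite -cardE; apply: leq_trans card_free_slots; rewrite cardE index_mem mem_enum.
set p := nth (i0, false) (enum slots) (index y (enum (Y :\: N))).
have p_slot : p \in slots by rewrite -mem_enum mem_nth.
have fill_p : fill p = y by rewrite /fill index_uniq ?enum_uniq // nth_index ?mem_enum.
by exists p.1; rewrite -fill_p; apply: reassigned_fill; rewrite inE in p_slot.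
Qed.

Lemma reassigned_endpoint i x : endpoint (reassigned i) x -> x \in Y \/ endpoint (A i) x.
Proof.
rewrite /reassigned; case: ifP => [_ | /negbT not_keep]; first by right.
case/orP => /eqP -> /=.
  by case: (slot_endpoint false not_keep) => [|->]; [left | right; apply: endpoint_fst].
by case: (slot_endpoint true not_keep) => [|->]; [left | right; apply: endpoint_snd].
Qed.

End Reassign.

Lemma reassign (T : finType) (m : nat) (A : 'I_m -> T * T) (N Y : {set T}) :
  0 < m -> N \subset Y -> #|Y| <= 2 * m ->
  (forall y, y \in N -> exists i, endpoint (A i) y) ->
  exists A' : 'I_m -> T * T, [/\
    forall y, y \in Y -> exists i, endpoint (A' i) y,
    forall y, y \in N -> exists2 i, endpoint (A i) y & A' i = A i \/ (A' i).1 = y &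
    forall i x, endpoint (A' i) x -> x \in Y \/ endpoint (A i) x].
Proof.
move=> m_gt0 N_Y card_Y N_covered; exists (reassigned A N Y m_gt0); split.
- exact: reassigned_covers.
- exact: reassigned_keeps.
- exact: reassigned_endpoint.
Qed.

Section Game.
Variables (T : finType) (e : rel T) (I : finType) (t : rel I) (W : I -> {set T}).
Variables (m : nat) (v0 : T).
Hypothesis e_sym : symmetric e.
Hypothesis td : tree_decomposition e t W.
Hypothesis small_bags : forall x, #|W x| <= 2 * m.
Hypothesis m_gt0 : 0 < m.

Let C := component e v0.

Let C_closed x y : x \in C -> e x y -> y \in C.
Proof. by rewrite !inE => v0_x /connect1; apply: connect_trans. Qed.

Let C_fin : {in C &, forall x y, dist e x y < #|T|}.
Proof.
move=> x y; rewrite !inE => v0_x v0_y; apply: connect_dist_lt.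
by apply: connect_trans v0_y; rewrite (sym_connect_sym e_sym).
Qed.

(* Cop [i] guards the pair [A i] = (a, b): it guards [a], and it guards [b]
   once it shadows the robber on the geodesic from [b] to [a]. *)
Definition protects (A : 'I_m -> T * T) (c : cops T m) r y :=
  exists i, (y = (A i).1 /\ guards e y (c i) r) \/
            (y = (A i).2 /\ shadowing e (A i).1 (A i).2 (c i) r).

(* The robber is in [D], or on its neighbourhood, where he is caught at once.
   [Y] is the part of a bag covered by the cops' pairs. *)
Record invariant (D Y : {set T}) (A : 'I_m -> T * T) (c : cops T m) (r : T) : Prop := {
  cops_in : forall i, c i \in C;
  robber_in : r \in C;
  pairs_in : forall i y, endpoint (A i) y -> y \in C;
  robber_near : (r \in D) || (r \in nbhd e D);
  nbhd_sub : nbhd e D \subset Y;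
  in_bag : exists z, Y \subset W z;
  meets : exists2 y, y \in Y & y \in D;
  covered : forall y, y \in Y -> exists i, endpoint (A i) y;
  protected : forall y, y \in nbhd e D -> protects A c r y }.

Definition cops_move (A : 'I_m -> T * T) (c : cops T m) r : cops T m :=
  [ffun i => guard_move e (A i).1 (A i).2 (c i) r].

Definition potential (A : 'I_m -> T * T) (c : cops T m) r :=
  \sum_i guard_potential e (A i).1 (A i).2 (c i) r.

Lemma cops_move_step (A : 'I_m -> T * T) (c : cops T m) r : cop_step e c (cops_move A c r).
Proof.
by move=> i; rewrite ffunE; case: (guard_move_step e_sym (A i).1 (A i).2 (c i) r); [left|right].
Qed.

Lemma protected_capture (A : 'I_m -> T * T) (c : cops T m) r : (forall i, c i \in C) ->
  (forall i y, endpoint (A i) y -> y \in C) -> protects A c r r -> cops_win e c r.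
Proof.
move=> cops_C pairs_C [i caught_i]; apply: cw_move (cops_move_step A c r) _.
left; exists i; rewrite ffunE.
have a_C := pairs_C i _ (endpoint_fst _); have b_C := pairs_C i _ (endpoint_snd _).
case: caught_i => [[r_a guard_a] | [r_b sh]].
  by rewrite r_a in guard_a *; apply: (guard_captures C_closed C_fin).
by rewrite r_b in sh *; apply: shadowing_captures.
Qed.

Lemma shadowing_guards_endpoint a b c r y :
  shadowing e a b c r -> endpoint (a, b) y -> guards e y c r.
Proof.
move=> sh /orP [] /eqP ->; first exact: shadowing_guards sh.
exact: shadowing_guards_end sh.
Qed.

Lemma invariant_move D Y A c r r' : invariant D Y A c r -> r \in D -> r' = r \/ e r r' ->
  invariant D Y A (cops_move A c r) r'.
Proof.
case=> cops_C r_C pairs_C _ N_Y Y_bag Y_D Y_cov prot r_D r_r'.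
have a_C i := pairs_C i _ (endpoint_fst (A i)); have b_C i := pairs_C i _ (endpoint_snd (A i)).
split => //.
- by move=> i; rewrite ffunE; apply: guard_move_in.
- by case: r_r' => [-> | /(C_closed r_C)].
- case: r_r' => [-> | e_rr']; first by rewrite r_D.
  by rewrite inE; case: (r' \in D) => //=; apply/existsP; exists r; rewrite r_D.
- move=> y /prot [i [[-> g] | [-> sh]]]; exists i; rewrite ffunE; [left | right].
    by split => //; apply: (guards_move e_sym C_closed C_fin (a_C i) (b_C i) (cops_C i) r_r' g).
  by split => //; apply: (shadowing_move e_sym C_closed C_fin (a_C i) (b_C i) r_r' sh).
Qed.

Lemma potential_move (A : 'I_m -> T * T) (c : cops T m) r r' :
  (forall i, c i \in C) -> (forall i y, endpoint (A i) y -> y \in C) -> r' = r \/ e r r' ->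
  ~~ [forall i, shadowing e (A i).1 (A i).2 (c i) r] ->
  potential A (cops_move A c r) r' < potential A c r.
Proof.
move=> cops_C pairs_C r_r' /forallPn [j not_sh].
have a_C i := pairs_C i _ (endpoint_fst (A i)); have b_C i := pairs_C i _ (endpoint_snd (A i)).
have le_i i : guard_potential e (A i).1 (A i).2 (cops_move A c r i) r'
              <= guard_potential e (A i).1 (A i).2 (c i) r.
  rewrite ffunE; have [sh | not_sh'] := boolP (shadowing e (A i).1 (A i).2 (c i) r).
    have sh' := shadowing_move e_sym C_closed C_fin (a_C i) (b_C i) r_r' sh.
    by rewrite (potential_shadowing sh) (potential_shadowing sh').
  exact/ltnW/(potential_decrease e_sym C_closed C_fin (a_C i) (b_C i) (cops_C i) r_r' not_sh').
have lt_j : guard_potential e (A j).1 (A j).2 (cops_move A c r j) r'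
            < guard_potential e (A j).1 (A j).2 (c j) r.
  rewrite ffunE.
  exact: (potential_decrease e_sym C_closed C_fin (a_C j) (b_C j) (cops_C j) r_r' not_sh).
rewrite /potential (bigD1 j) //= [X in _ < X](bigD1 j) //=.
by rewrite -addSn leq_add // leq_sum.
Qed.

Lemma invariant_from_bag (D : {set T}) r0 x (A : 'I_m -> T * T) (c : cops T m) r :
  r0 \in D -> (forall u, u \in D -> connect (induced e D) r0 u) -> r \in D -> D \subset C ->
  nbhd e D \subset W x -> (forall i, c i \in C) -> (forall i y, endpoint (A i) y -> y \in C) ->
  (forall y, y \in nbhd e D -> exists i, endpoint (A i) y) ->
  (forall y i, y \in nbhd e D -> endpoint (A i) y -> shadowing e (A i).1 (A i).2 (c i) r) ->
  exists Y (A' : 'I_m -> T * T), invariant D Y A' c r.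
Proof.
move=> r0_D D_conn r_D D_C N_x cops_C pairs_C N_cov N_sh.
have [z [N_z [d d_D d_z]]] := td_nbhd_bag td r0_D D_conn N_x.
pose Y := W z :&: (D :|: nbhd e D).
have N_Y : nbhd e D \subset Y by rewrite subsetI N_z subsetUr.
have Y_C : Y \subset C.
  apply/subsetP => y /setIP [_ /setUP [/(subsetP D_C) // | ]].
  by rewrite inE => /andP [_ /existsP [w /andP [/(subsetP D_C) w_C /(C_closed w_C)]]].
have card_Y : #|Y| <= 2 * m := leq_trans (subset_leq_card (subsetIl _ _)) (small_bags z).
have [A' [Y_cov keeps A'_ends]] := reassign m_gt0 N_Y card_Y N_cov.
exists Y, A'; split => //.
- exact: (subsetP D_C).
- by move=> i y /A'_ends [/(subsetP Y_C) | /pairs_C].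
- by rewrite r_D.
- by exists z; apply: subsetIl.
- by exists d; rewrite // !inE d_z d_D.
move=> y y_N; have [i end_y kept] := keeps y y_N; have sh := N_sh y i y_N end_y.
exists i; case: kept => [eq_i | first_i].
  rewrite eq_i; case/orP: end_y => /eqP ->; [left | right]; split => //.
  exact: shadowing_guards sh.
by left; split; [rewrite first_i | apply: shadowing_guards_endpoint sh end_y].
Qed.

Lemma invariant_shrink D Y A c r : invariant D Y A c r -> r \in D -> r \notin Y ->
  (forall i, shadowing e (A i).1 (A i).2 (c i) r) ->
  exists (D' Y' : {set T}) (A' : 'I_m -> T * T), #|D'| < #|D| /\ invariant D' Y' A' c r.
Proof.
case=> cops_C r_C pairs_C _ N_Y [z Y_z] [y y_Y y_D] Y_cov _ r_D r_Y all_sh.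
set D' := component_in e (D :\: Y) r.
have r_DY : r \in D :\: Y by rewrite inE r_Y.
have r_D' : r \in D' by rewrite inE connect0.
have D'_DY := component_in_sub e r_DY.
have N'_Y : nbhd e D' \subset Y.
  apply: subset_trans (nbhd_component_in e r_DY) _; apply: subset_trans (nbhd_setD e D Y) _.
  by rewrite subUset subxx N_Y.
have D'_C : D' \subset C.
  apply/subsetP => u; rewrite !inE => r_u; move: r_C; rewrite inE => /connect_trans; apply.
  by apply: connect_sub r_u => a b /and3P [e_ab _ _]; apply: connect1.
have [Y' [A' inv']] := invariant_from_bag r_D' (@component_in_connected _ e _ r) r_D' D'_C
  (subset_trans N'_Y Y_z) cops_C pairs_C (fun y y_N => Y_cov y (subsetP N'_Y y y_N))
  (fun y i _ _ => all_sh i).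
exists D', Y', A'; split => //.
apply: proper_card; apply/properP; split; first exact: subset_trans D'_DY (subsetDl _ _).
by exists y => //; apply: contraL y_Y => /(subsetP D'_DY); rewrite inE => /andP [].
Qed.

Lemma invariant_cops_win D Y A c r : invariant D Y A c r -> cops_win e c r.
Proof.
move Ek : #|D| => k; elim/ltn_ind: k D Y A c r Ek => k IHk D Y A c r Ek.
move Ep : (potential A c r) => p; elim/ltn_ind: p c r Ep => p IHp c r Ep inv.
have [cops_C r_C pairs_C r_near _ _ _ Y_cov prot] := inv.
have [r_N | r_notN] := boolP (r \in nbhd e D); first exact: protected_capture (prot r r_N).
have r_D : r \in D by move: r_near; rewrite (negbTE r_notN) orbF.
have [all_sh | not_all] := boolP [forall i, shadowing e (A i).1 (A i).2 (c i) r].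
  move/forallP: all_sh => all_sh.
  have [r_Y | r_notY] := boolP (r \in Y).
    apply: (protected_capture cops_C pairs_C); have [i end_r] := Y_cov r r_Y; exists i.
    case/orP: end_r => /eqP r_end; [left | right]; split => //.
    by rewrite {1}r_end; apply: shadowing_guards (all_sh i).
  have [D' [Y' [A' [lt_D inv']]]] := invariant_shrink inv r_D r_notY all_sh.
  by apply: (IHk _ _ _ _ _ _ _ erefl inv'); rewrite -Ek.
apply: cw_move (cops_move_step A c r) _; right => r' r_r'.
apply: IHp (invariant_move inv r_D r_r'); last by [].
by rewrite -Ep; apply: potential_move.
Qed.

Lemma component_cops_win : k_cops_win e (component e v0) m.
Proof.
have v0_C : v0 \in C by rewrite inE connect0.
exists [ffun=> v0]; split => [i | r r_C]; first by rewrite ffunE.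
have no_nbhd : nbhd e C = set0.
  apply/setP => y; rewrite /nbhd in_set in_set0; apply/negP.
  case/andP => y_C /existsP [x /andP [x_C e_xy]].
  by rewrite (C_closed x_C e_xy) in y_C.
case: (td) => _ bag_cover _ _; have [x _] := bag_cover v0.
have [Y [A inv]] : exists Y (A : 'I_m -> T * T), invariant C Y A [ffun=> v0] r.
  apply: (@invariant_from_bag C v0 x (fun=> (v0, v0))) => //; rewrite ?no_nbhd ?sub0set //.
  - by move=> u; rewrite inE; apply: connect_induced_closure.
  - by move=> i; rewrite ffunE.
  - by move=> i y /orP [] /eqP ->.
  - by move=> y; rewrite inE.
  - by move=> y i; rewrite inE.
exact: invariant_cops_win inv.
Qed.

End Game.

Lemma tw_plus1_td (T : finType) (e : rel T) : has_td_bagsize e (tw_plus1 e).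
Proof. by apply/pbP; rewrite /tw_plus1; case: ex_minnP. Qed.

Lemma cop_number_comp_le (T : finType) (e : rel T) v k :
  0 < k -> k_cops_win e (component e v) k -> cop_number_comp e v <= k.
Proof.
by move=> k_gt0 win; rewrite /cop_number_comp; case: ex_minnP => j _; apply; apply/pbP.
Qed.

Lemma cop_number_le_half (T : finType) (e : rel T) b :
  symmetric e -> has_td_bagsize e b -> cop_number e <= b.+1./2.
Proof.
move=> e_sym [n [t [W [td small_bags]]]]; apply/bigmax_leqP => v _.
have b_gt0 : 0 < b.
  by case: td => _ /(_ v) [x v_x] _ _; apply: leq_trans (small_bags x); apply/card_gt0P; exists v.
have le_b : b <= 2 * b.+1./2 by have := odd_double_half b.+1; case: odd => /=; lia.
apply: cop_number_comp_le; first lia.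
by apply: component_cops_win e_sym td _ _ => [x|]; [apply: leq_trans le_b | lia].
Qed.

Import Order.TTheory GRing.Theory Num.Theory.
Local Open Scope ring_scope.
Unset Implicit Arguments.

Theorem proposition5 (T : finType) (e : rel T)
    (e_sym : symmetric e) (e_irr : irreflexive e) :
  ((cop_number e)%:R : rat) <= (treewidth e)%:~R / 2 + 1.
Proof.
have := cop_number_le_half e_sym (tw_plus1_td e).
have := odd_double_half (tw_plus1 e).+1.
set B := tw_plus1 e => half_B le_cop.
have cop2 : (cop_number e * 2 <= B + 1)%N.
  by move: half_B le_cop; rewrite -muln2; case: odd => /=; lia.
rewrite -(ler_nat rat) natrM natrD in cop2.
rewrite /treewidth -/B intrB; lra.
Qed.
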